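(* Let $q_{12},q_{13}\in\mathbb{H}$ with $k=|q_{12}|^2+|q_{13}|^2>0$, and let $\tilde A=\begin{pmatrix}0&q_{12}&q_{13}\\0&1&0\\0&0&1\end{pmatrix}$. Then $W(\tilde A)=\bigcup_{d\in[0,1]}\mathbb{D}_{\mathbb{H}}\big(d,\sqrt{kd(1-d)}\big)$, and, identifying $\mathbb{C}=\mathbb{R}+\mathbb{R}i\subset\mathbb{H}$ with $\mathbb{R}^2$ via $x+yi\mapsto(x,y)$, $$W(\tilde A)\cap\mathbb{C}=\bigcup_{d\in[0,1]}\mathbb{D}_{\mathbb{C}}\big(d,\sqrt{kd(1-d)}\big)=\Big\{(x,y)\in\mathbb{R}^2:\ \frac{(x-\frac12)^2}{\frac{k+1}{4}}+\frac{y^2}{\frac{k}{4}}\le1\Big\}.$$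
   Context: $\mathbb{H}$ denotes the real quaternions, $|q|^2=qq^*$. The numerical range of $A\in\mathcal{M}_n(\mathbb{H})$ is $W(A)=\{\mathbf{x}^*A\mathbf{x}:\mathbf{x}\in\mathbb{H}^n,\ \mathbf{x}^*\mathbf{x}=1\}$. $\mathbb{D}_{\mathbb{H}}(c,r)=\{q\in\mathbb{H}:|q-c|\le r\}$ and $\mathbb{D}_{\mathbb{C}}(c,r)=\{z\in\mathbb{C}:|z-c|\le r\}$. *)

(* Real quaternions over an arbitrary real closed field R
   (the paper's H is the case R = real numbers). *)
From HB Require Import structures.
From mathcomp Require Import all_boot all_order all_algebra.
Set Implicit Arguments. Unset Strict Implicit. Unset Printing Implicit Defensive.
Import Order.TTheory GRing.Theory Num.Theory.
Local Open Scope ring_scope.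

Record quat (R : Type) := Quat { qre : R; qi : R; qj : R; qk : R }.

Section Quat.
Variable R : rcfType.

Definition qzero : quat R := Quat 0 0 0 0.
Definition qone : quat R := Quat 1 0 0 0.
Definition qreal (r : R) : quat R := Quat r 0 0 0.
Definition qadd (p q : quat R) : quat R :=
  Quat (qre p + qre q) (qi p + qi q) (qj p + qj q) (qk p + qk q).
Definition qopp (p : quat R) : quat R := Quat (- qre p) (- qi p) (- qj p) (- qk p).
Definition qsub (p q : quat R) : quat R := qadd p (qopp q).
(* Hamilton product: i^2 = j^2 = k^2 = ijk = -1 *)
Definition qmul (p q : quat R) : quat R :=
  Quat (qre p * qre q - qi p * qi q - qj p * qj q - qk p * qk q)
       (qre p * qi q + qi p * qre q + qj p * qk q - qk p * qj q)
       (qre p * qj q - qi p * qk q + qj p * qre q + qk p * qi q)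
       (qre p * qk q + qi p * qj q - qj p * qi q + qk p * qre q).
Definition qconj (p : quat R) : quat R := Quat (qre p) (- qi p) (- qj p) (- qk p).
Definition qnorm2 (p : quat R) : R :=
  qre p ^+ 2 + qi p ^+ 2 + qj p ^+ 2 + qk p ^+ 2.
Definition qabs (p : quat R) : R := Num.sqrt (qnorm2 p).

Definition numrange (n : nat) (A : 'M[quat R]_n) (q : quat R) : Prop :=
  exists x : 'cV[quat R]_n,
    \big[qadd/qzero]_(i < n) qmul (qconj (x i ord0)) (x i ord0) = qone /\
    q = \big[qadd/qzero]_(i < n) \big[qadd/qzero]_(j < n)
          qmul (qconj (x i ord0)) (qmul (A i j) (x j ord0)).

Definition diskH (c : quat R) (r : R) (q : quat R) : Prop := qabs (qsub q c) <= r.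
(* D_C(c, r) = { z in C : |z - c| <= r }, with z = x + y i as the pair (x, y),
   c = c1 + c2 i *)
Definition diskC (c1 c2 : R) (r : R) (x y : R) : Prop :=
  Num.sqrt ((x - c1) ^+ 2 + (y - c2) ^+ 2) <= r.
Definition qofC (x y : R) : quat R := Quat x y 0 0.

Definition Atilde (q12 q13 : quat R) : 'M[quat R]_3 :=
  \matrix_(i < 3, j < 3)
    if (i == 0%N :> nat) && (j == 1%N :> nat) then q12
    else if (i == 0%N :> nat) && (j == 2%N :> nat) then q13
    else if (i == j) && (i != 0%N :> nat) then qone
    else qzero.
End Quat.

From HB Require Import structures.
From mathcomp Require Import all_boot all_order all_algebra.
From mathcomp Require Import ring lra.
Import Order.TTheory GRing.Theory Num.Theory.
Local Open Scope ring_scope.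

(* Write k = |q12|^2 + |q13|^2 > 0,
   P = Re q, N = |q|^2, and consider the real quadratic in d
     f_q(d) = |q - d|^2 - k d (1 - d) = (1 + k) d^2 - (2P + k) d + N,
   with discriminant disc_k(q) = (2P + k)^2 - 4 (1 + k) N.
   We prove that the following are equivalent for every quaternion q:
   (a) q is in W(A~);  (b) f_q(d) <= 0 for some d in [0, 1];  (c) disc_k(q) >= 0.
   (a) -> (b): x^* A~ x = x1^* (q12 x2 + q13 x3) + d with d = |x2|^2 + |x3|^2,
     and the quaternionic Cauchy-Schwarz inequality bounds the first term.
   (b) -> (c): completing the square, 4 (1 + k) f_q(d) = (2 (1 + k) d - 2P - k)^2
     - disc_k(q).
   (c) -> (a): the larger root d of f_q lies in (0, 1], and an explicit unit
     vector x (built from conjugates of q - d, q12, q13) gives x^* A~ x = q.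
   Condition (b) is the union of quaternionic disks; for q = x + y i, condition
   (c) is, after clearing denominators, exactly the ellipse inequality.
   The file first collects norm identities for quaternions, then studies f_q and
   its discriminant for an arbitrary k > 0, then the numerical range of A~, and
   finally translates between squared norms, disks and the ellipse. *)

Set Implicit Arguments.
Unset Strict Implicit.
Unset Printing Implicit Defensive.

Section QuaternionAlgebra.
Variable R : rcfType.
Implicit Types (p q u w : quat R) (r : R).

Lemma quatE p q :
  qre p = qre q -> qi p = qi q -> qj p = qj q -> qk p = qk q -> p = q.
Proof. by case: p; case: q => /= ? ? ? ? ? ? ? ? -> -> -> ->. Qed.

Definition qdot u w : R :=
  qre u * qre w + qi u * qi w + qj u * qj w + qk u * qk w.

Definition qscale r p : quat R :=
  Quat (r * qre p) (r * qi p) (r * qj p) (r * qk p).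

Lemma qnorm2_ge0 p : 0 <= qnorm2 p.
Proof. by rewrite /qnorm2 !addr_ge0 ?sqr_ge0. Qed.

Lemma qnorm2M p q : qnorm2 (qmul p q) = qnorm2 p * qnorm2 q.
Proof. rewrite /qnorm2 /=; ring. Qed.

Lemma qnorm2_conj p : qnorm2 (qconj p) = qnorm2 p.
Proof. rewrite /qnorm2 /=; ring. Qed.

Lemma qnorm2_scale r p : qnorm2 (qscale r p) = r ^+ 2 * qnorm2 p.
Proof. rewrite /qnorm2 /=; ring. Qed.

Lemma qmul_conjr p r : qmul p (qscale r (qconj p)) = qreal (r * qnorm2 p).
Proof. by apply: quatE; rewrite /qnorm2 /=; ring. Qed.

Lemma qnorm2D u w : qnorm2 (qadd u w) = qnorm2 u + qnorm2 w + 2 * qdot u w.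
Proof. rewrite /qnorm2 /qdot /=; ring. Qed.

Lemma qnorm2_sub_real q r :
  qnorm2 (qsub q (qreal r)) = qnorm2 q - 2 * qre q * r + r ^+ 2.
Proof. rewrite /qnorm2 /=; ring. Qed.

Lemma qre_sqr_le_qnorm2 q : qre q ^+ 2 <= qnorm2 q.
Proof. by rewrite /qnorm2 -!addrA lerDl !addr_ge0 ?sqr_ge0. Qed.

(* Cauchy-Schwarz in R^4, via Lagrange's identity. *)
Lemma qdot_sqr_le u w : qdot u w ^+ 2 <= qnorm2 u * qnorm2 w.
Proof.
have -> : qnorm2 u * qnorm2 w = qdot u w ^+ 2 +
  ((qre u * qi w - qi u * qre w) ^+ 2 + (qre u * qj w - qj u * qre w) ^+ 2 +
   (qre u * qk w - qk u * qre w) ^+ 2 + (qi u * qj w - qj u * qi w) ^+ 2 +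
   (qi u * qk w - qk u * qi w) ^+ 2 + (qj u * qk w - qk u * qj w) ^+ 2).
  by rewrite /qdot /qnorm2; ring.
by rewrite lerDl !addr_ge0 ?sqr_ge0.
Qed.

Lemma qnorm2_lincomb_le (a b x y : quat R) :
  qnorm2 (qadd (qmul a x) (qmul b y)) <=
  (qnorm2 a + qnorm2 b) * (qnorm2 x + qnorm2 y).
Proof.
have cs := qdot_sqr_le (qmul a x) (qmul b y).
rewrite qnorm2D !qnorm2M in cs *.
have := qnorm2_ge0 a; have := qnorm2_ge0 b.
have := qnorm2_ge0 x; have := qnorm2_ge0 y.
move: (qnorm2 a) (qnorm2 b) (qnorm2 x) (qnorm2 y) (qdot _ _) cs.
move=> na nb nx ny s cs ny0 nx0 nb0 na0.
(* 4 s^2 <= 4 (na ny) (nb nx) <= (na ny + nb nx)^2, hence 2 s <= na ny + nb nx *)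
have am_gm : 4 * (na * nx * (nb * ny)) <= (na * ny + nb * nx) ^+ 2.
  have -> : (na * ny + nb * nx) ^+ 2 =
            (na * ny - nb * nx) ^+ 2 + 4 * (na * nx * (nb * ny)) by ring.
  by rewrite lerDr sqr_ge0.
have m0 : 0 <= na * ny + nb * nx by rewrite addr_ge0 ?mulr_ge0.
have : (2 * s) ^+ 2 <= (na * ny + nb * nx) ^+ 2 by lra.
nra.
Qed.

End QuaternionAlgebra.

Section Discriminant.
Variables (R : rcfType) (k : R).
Implicit Types (q : quat R) (d : R).

(* Discriminant of f_q(d) = |q - d|^2 - k d (1 - d) = (1 + k) d^2 - (2 Re q + k) d + |q|^2. *)
Definition disc q : R := (2 * qre q + k) ^+ 2 - 4 * (1 + k) * qnorm2 q.

(* Condition (b): q lies in some disk D_H(d, sqrt (k d (1 - d))), d in [0, 1],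
   written with squared norms. *)
Definition disk_union q : Prop :=
  exists d, 0 <= d <= 1 /\ qnorm2 (qsub q (qreal d)) <= k * d * (1 - d).

Lemma disk_defect_square q d :
  4 * (1 + k) * (qnorm2 (qsub q (qreal d)) - k * d * (1 - d)) =
  (2 * (1 + k) * d - (2 * qre q + k)) ^+ 2 - disc q.
Proof. by rewrite qnorm2_sub_real /disc; ring. Qed.

Lemma disc_ge0_of_disk_union q : 0 < k -> disk_union q -> 0 <= disc q.
Proof.
move=> k_gt0 [d [_ in_disk]]; have := disk_defect_square q d.
have : 4 * (1 + k) * (qnorm2 (qsub q (qreal d)) - k * d * (1 - d)) <= 0.
  by rewrite pmulr_rle0 ?subr_le0 // mulr_gt0 ?addr_gt0.
have := sqr_ge0 (2 * (1 + k) * d - (2 * qre q + k)); lra.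
Qed.

(* A nonnegative discriminant places the vertex (2 Re q + k) / (2 (1 + k))
   of f_q in (0, 1]: with u = 2 Re q, disc >= 0 and |q|^2 >= (Re q)^2 give
   u^2 <= k + 2 u. *)
Lemma disc_vertex_bounds q : 0 < k ->
  0 <= disc q -> 0 < 2 * qre q + k <= 2 * (1 + k).
Proof.
move=> k_gt0 disc_ge0; have := qre_sqr_le_qnorm2 q.
move: disc_ge0; rewrite /disc; move: (qre q) (qnorm2 q) => p n disc_ge0 pn.
have u_bound : (2 * p) ^+ 2 <= k + 2 * (2 * p).
  have scaled : 4 * (1 + k) * p ^+ 2 <= 4 * (1 + k) * n.
    by rewrite ler_pM2l // mulr_gt0 ?addr_gt0.
  rewrite -(ler_pM2l k_gt0); nra.
have b_gt0 : 0 < 2 * p + k by have := sqr_ge0 (2 * p); lra.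
rewrite b_gt0 /= leNgt; apply/negP => too_big.
(* u^2 - 2u - k = (u - (k + 2)) (u + k) + k^2 + k > 0 for u > k + 2 *)
have : 0 < (2 * p - (k + 2)) * (2 * p + k) by rewrite mulr_gt0 //; lra.
nra.
Qed.

(* (c) -> (b), sharpened: when disc q >= 0 the larger root of f_q lies in
   (0, 1]; it is at most 1 because f_q(1) = |q - 1|^2 >= 0. *)
Lemma disc_sphere_root q : 0 < k ->
  0 <= disc q -> exists d, 0 < d <= 1 /\ qnorm2 (qsub q (qreal d)) = k * d * (1 - d).
Proof.
move=> k_gt0 disc_ge0.
have /andP[b_gt0 b_le] := disc_vertex_bounds k_gt0 disc_ge0.
set b := 2 * qre q + k in b_gt0 b_le; set c := 2 * (1 + k) in b_le.
have c_gt0 : 0 < c by rewrite /c; lra.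
set e := Num.sqrt (disc q).
have e2 : e ^+ 2 = disc q by rewrite sqr_sqrtr.
have e_ge0 : 0 <= e by rewrite sqrtr_ge0.
have e_le : e <= c - b.
  have := disk_defect_square q 1.
  rewrite mulr1 subrr mulr0 subr0 -/b -/c => f1.
  have f1_ge0 : 0 <= 4 * (1 + k) * qnorm2 (qsub q (qreal 1)).
    by rewrite mulr_ge0 ?qnorm2_ge0 // mulr_ge0 // addr_ge0 // ltW.
  rewrite -ler_sqr ?nnegrE ?subr_ge0 // e2; lra.
exists ((b + e) / c); split.
  apply/andP; split; first by rewrite divr_gt0 //; lra.
  by rewrite ler_pdivrMr // mul1r; lra.
have dc : (b + e) / c * c = b + e by rewrite mulfVK // gt_eqF.
have := disk_defect_square q ((b + e) / c).
rewrite -/b -/c [c * _]mulrC dc [b + e]addrC addrK e2 subrr.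
move/eqP; rewrite mulf_eq0 subr_eq0 => /orP[/eqP four_k_eq0 | /eqP //].
by move: four_k_eq0; lra.
Qed.
End Discriminant.

Section NumericalRange.
Variables (R : rcfType) (q12 q13 : quat R).
Implicit Types (q : quat R) (d : R).

(* The quadratic form x^* A~ x for x = (x1, x2, x3). *)
Definition Aform (x1 x2 x3 : quat R) : quat R :=
  qadd (qmul (qconj x1) (qadd (qmul q12 x2) (qmul q13 x3)))
       (qreal (qnorm2 x2 + qnorm2 x3)).

Lemma numrange_AtildeE q :
  numrange (Atilde q12 q13) q <->
  exists x1 x2 x3 : quat R, qnorm2 x1 + qnorm2 x2 + qnorm2 x3 = 1 /\ q = Aform x1 x2 x3.
Proof.
split.
- case=> x [unit_x ->].
  exists (x ord0 ord0), (x (lift ord0 ord0) ord0),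
         (x (lift ord0 (lift ord0 ord0)) ord0).
  rewrite !big_ord_recl !big_ord0 !mxE /= in unit_x *.
  split; last by apply: quatE; rewrite /= /qnorm2 /=; ring.
  by move/(f_equal (@qre R)): unit_x => /= <-; rewrite /qnorm2; ring.
- case=> x1 [x2 [x3 [unit_x ->]]].
  exists (\col_(i < 3) nth (qzero R) [:: x1; x2; x3] i).
  rewrite !big_ord_recl !big_ord0 !mxE /=.
  split; first by apply: quatE; rewrite /= -?unit_x /qnorm2 /=; ring.
  by apply: quatE; rewrite /= /qnorm2 /=; ring.
Qed.

Let k := qnorm2 q12 + qnorm2 q13.

(* (a) -> (b): every point of W(A~) lies in the disk centred at some d in
   [0, 1] of squared radius k d (1 - d); d is the weight of x on e2, e3. *)
Lemma numrange_in_disk_union q :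
  numrange (Atilde q12 q13) q -> disk_union k q.
Proof.
rewrite numrange_AtildeE => -[x1 [x2 [x3 [unit_x ->]]]].
exists (qnorm2 x2 + qnorm2 x3).
have := qnorm2_ge0 x1; have := qnorm2_ge0 x2; have := qnorm2_ge0 x3.
move=> n3 n2 n1; split; first by apply/andP; split; lra.
have -> : qsub (Aform x1 x2 x3) (qreal (qnorm2 x2 + qnorm2 x3)) =
          qmul (qconj x1) (qadd (qmul q12 x2) (qmul q13 x3)).
  by apply: quatE; rewrite /= /qnorm2 /=; ring.
rewrite qnorm2M qnorm2_conj (_ : qnorm2 x1 = 1 - (qnorm2 x2 + qnorm2 x3)); last by lra.
rewrite [k * _ * _]mulrC; apply: ler_wpM2l; first by lra.
exact: qnorm2_lincomb_le.
Qed.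

(* (c) -> (a), explicit part: a point on the sphere of radius sqrt (k d (1 - d))
   around d in (0, 1] is attained at the unit vector
   x = (conj (q - d) / (a k), a conj q12, a conj q13) with a = sqrt (d / k). *)
Lemma sphere_in_numrange q d :
  0 < k -> 0 < d <= 1 -> qnorm2 (qsub q (qreal d)) = k * d * (1 - d) ->
  numrange (Atilde q12 q13) q.
Proof.
move=> k_gt0 /andP[d_gt0 _] on_sphere.
set a := Num.sqrt (d / k).
have a2k : a ^+ 2 * k = d.
  by rewrite sqr_sqrtr ?divr_ge0 ?ltW // mulfVK // gt_eqF.
have a_neq0 : a != 0 by rewrite gt_eqF // sqrtr_gt0 divr_gt0.
have k_neq0 : k != 0 by rewrite gt_eqF.
apply/numrange_AtildeE.
exists (qscale (a * k)^-1 (qconj (qsub q (qreal d)))),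
       (qscale a (qconj q12)), (qscale a (qconj q13)).
(* |x1|^2 = (1 - d) and |x2|^2 + |x3|^2 = d; the form gives (q - d) + d *)
rewrite /Aform !qmul_conjr !qnorm2_scale !qnorm2_conj on_sphere -a2k /k.
split; first by field; rewrite k_neq0 a_neq0.
by apply: quatE => /=; field; rewrite k_neq0 a_neq0.
Qed.

Lemma numrange_Atilde_disc q :
  0 < k -> numrange (Atilde q12 q13) q <-> 0 <= disc k q.
Proof.
move=> k_gt0; split; first by move/numrange_in_disk_union/disc_ge0_of_disk_union; apply.
by case/(disc_sphere_root k_gt0)=> d [d01 on_sphere]; exact: sphere_in_numrange d01 on_sphere.
Qed.

Lemma numrange_Atilde_disk_union q :
  0 < k -> numrange (Atilde q12 q13) q <-> disk_union k q.
Proof.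
move=> k_gt0; split; first exact: numrange_in_disk_union.
by move/(disc_ge0_of_disk_union k_gt0)/numrange_Atilde_disc; apply.
Qed.
End NumericalRange.

Section Disks.
Variables (R : rcfType) (k : R).
Implicit Types (q : quat R) (c d r x y : R).

Lemma diskH_sqrtE c r q :
  0 <= r -> diskH (qreal c) (Num.sqrt r) q = (qnorm2 (qsub q (qreal c)) <= r).
Proof. by move=> r_ge0; rewrite /diskH /qabs ler_sqrt. Qed.

Lemma diskC_diskH c r x y : diskC c 0 r x y = diskH (qreal c) r (qofC x y).
Proof. by rewrite /diskC /diskH /qabs /qnorm2 /=; congr (Num.sqrt _ <= r); ring. Qed.

Lemma disk_unionE_diskH q : 0 <= k ->
  (exists d, 0 <= d <= 1 /\ diskH (qreal d) (Num.sqrt (k * d * (1 - d))) q) <->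
  disk_union k q.
Proof.
move=> k_ge0.
have radius_ge0 d : 0 <= d <= 1 -> 0 <= k * d * (1 - d).
  by case/andP=> d_ge0 d_le1; rewrite !mulr_ge0 ?subr_ge0.
by split=> -[d [d01 in_disk]]; exists d; move: in_disk; rewrite diskH_sqrtE ?radius_ge0.
Qed.

Lemma disk_unionE_diskC x y : 0 <= k ->
  (exists d, 0 <= d <= 1 /\ diskC d 0 (Num.sqrt (k * d * (1 - d))) x y) <->
  disk_union k (qofC x y).
Proof.
move=> k_ge0; rewrite -disk_unionE_diskH //.
by split=> -[d [d01 in_disk]]; exists d; move: in_disk; rewrite diskC_diskH.
Qed.

Lemma ellipse_disc x y : 0 < k ->
  ((x - 2^-1) ^+ 2 / ((k + 1) / 4%:R) + y ^+ 2 / (k / 4%:R) <= 1) =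
  (0 <= disc k (qofC x y)).
Proof.
move=> k_gt0; have kk_gt0 : 0 < k * (k + 1) by rewrite mulr_gt0 ?addr_gt0.
have -> : disc k (qofC x y) =
          k * (k + 1) - (k * (2 * x - 1) ^+ 2 + 4 * (k + 1) * y ^+ 2).
  by rewrite /disc /qnorm2 /=; ring.
have -> : (x - 2^-1) ^+ 2 / ((k + 1) / 4%:R) + y ^+ 2 / (k / 4%:R) =
          (k * (2 * x - 1) ^+ 2 + 4 * (k + 1) * y ^+ 2) / (k * (k + 1)).
  by field; rewrite !gt_eqF ?addr_gt0.
by rewrite ler_pdivrMr // mul1r subr_ge0.
Qed.
End Disks.

Theorem mainTheorem8 (R : rcfType) (q12 q13 : quat R) :
  let k := qnorm2 q12 + qnorm2 q13 in
  0 < k ->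
  (forall q : quat R,
     numrange (Atilde q12 q13) q <->
     exists d : R, 0 <= d <= 1 /\
       diskH (qreal d) (Num.sqrt (k * d * (1 - d))) q) /\
  (forall x y : R,
     (numrange (Atilde q12 q13) (qofC x y) <->
      exists d : R, 0 <= d <= 1 /\
        diskC d 0 (Num.sqrt (k * d * (1 - d))) x y) /\
     ((exists d : R, 0 <= d <= 1 /\
        diskC d 0 (Num.sqrt (k * d * (1 - d))) x y) <->
      (x - 2^-1) ^+ 2 / ((k + 1) / 4%:R) + y ^+ 2 / (k / 4%:R) <= 1)).
Proof.
move=> k k_gt0; have k_ge0 := ltW k_gt0.
split=> [q | x y].
  by rewrite disk_unionE_diskH // numrange_Atilde_disk_union.
rewrite disk_unionE_diskC // ellipse_disc //.
by rewrite -numrange_Atilde_disk_union // numrange_Atilde_disc.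
Qed.
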